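(* $E_{FTP}$ is sound and ground-complete for bisimilarity on $T(\Sigma_{FTP})$: for all $t,t'\in T(\Sigma_{FTP})$, $E_{FTP}\vdash t=t'$ if and only if $t\sim t'$.
   Context: Fix a finite nonempty set $\mathcal A$ of actions, a finite set $\mathcal P$ of predicates, a subset $\mathcal P^I\subseteq\mathcal P$ of implicit predicates, and for each $P\in\mathcal P^I$ a set $\mathcal A_P\subseteq\mathcal A$. $\Sigma_{FTP}$ consists of a constant $\delta$, constants $\kappa_P$ ($P\in\mathcal P$), unary prefixes $a.\_$ ($a\in\mathcal A$), and binary $+$; closed terms $T(\Sigma_{FTP})$. Semantics: the least transition relation and predicate relation closed under: $a.x\xrightarrow{a}x$; $x\xrightarrow{a}x'\Rightarrow x+y\xrightarrow{a}x'$; $y\xrightarrow{a}y'\Rightarrow x+y\xrightarrow{a}y'$; $P\kappa_P$; $Px\Rightarrow P(x+y)$; $Py\Rightarrow P(x+y)$; $Px\Rightarrow P(a.x)$ for $P\in\mathcal P^I$, $a\in\mathcal A_P$. A symmetric relation $R$ on closed terms is a bisimulation if whenever $(s,t)\in R$: $s\xrightarrow{a}s'$ implies $t\xrightarrow{a}t'$ with $(s',t')\in R$ for some $t'$, and $Ps$ implies $Pt$; $\sim$ is the union of all bisimulations. $E_{FTP}$ consists of $x+y=y+x$, $(x+y)+z=x+(y+z)$, $x+x=x$, $x+\delta=x$, and $a.(x+\kappa_P)=a.(x+\kappa_P)+\kappa_P$ for $P\in\mathcal P^I$, $a\in\mathcal A_P$; $\vdash$ is derivability in equational logic. *)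

From mathcomp Require Import all_boot.
Set Implicit Arguments. Unset Strict Implicit. Unset Printing Implicit Defensive.

(* Terms are open
   (variables indexed by nat) so that equational logic can be defined with
   substitution; closed_term terms are those without variables. *)
Section FTP.
Variables (A Pr : finType).
Variable (implicit : pred Pr).
Variable (AP : Pr -> pred A).           (* P |-> A_P (used only for P in P^I) *)

Inductive term : Type :=
| Var  : nat -> term
| Dlt  : term
| Kap  : Pr -> term
| Pre  : A -> term -> term
| Plus : term -> term -> term.

Fixpoint closed_term (t : term) : Prop :=
  match t with
  | Var _ => False
  | Dlt => True
  | Kap _ => True
  | Pre _ u => closed_term u
  | Plus u v => closed_term u /\ closed_term v
  end.

Inductive step : term -> A -> term -> Prop :=
| step_pre a x : step (Pre a x) a x
| step_plusl a x x' y : step x a x' -> step (Plus x y) a x'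
| step_plusr a x y y' : step y a y' -> step (Plus x y) a y'.

Inductive holds : Pr -> term -> Prop :=
| holds_kap P : holds P (Kap P)
| holds_plusl P x y : holds P x -> holds P (Plus x y)
| holds_plusr P x y : holds P y -> holds P (Plus x y)
| holds_pre P a x : implicit P -> a \in AP P -> holds P x -> holds P (Pre a x).

Definition bisimulation (R : term -> term -> Prop) : Prop :=
  (forall s t, R s t -> closed_term s /\ closed_term t) /\
  (forall s t, R s t -> R t s) /\
  (forall s t, R s t ->
     (forall a s', step s a s' -> exists t', step t a t' /\ R s' t') /\
     (forall P, holds P s -> holds P t)).

Definition bisim (s t : term) : Prop :=
  exists R, bisimulation R /\ R s t.

Fixpoint subst (sg : nat -> term) (t : term) : term :=
  match t with
  | Var n => sg n
  | Dlt => Dlt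
  | Kap P => Kap P
  | Pre a u => Pre a (subst sg u)
  | Plus u v => Plus (subst sg u) (subst sg v)
  end.

Definition vx := Var 0.
Definition vy := Var 1.
Definition vz := Var 2.

Inductive axiom : term -> term -> Prop :=
| ax_comm : axiom (Plus vx vy) (Plus vy vx)
| ax_assoc : axiom (Plus (Plus vx vy) vz) (Plus vx (Plus vy vz))
| ax_idem : axiom (Plus vx vx) vx
| ax_delta : axiom (Plus vx Dlt) vx
| ax_impl P a : implicit P -> a \in AP P ->
    axiom (Pre a (Plus vx (Kap P))) (Plus (Pre a (Plus vx (Kap P))) (Kap P)).

Inductive derivable : term -> term -> Prop :=
| der_ax sg l r : axiom l r -> derivable (subst sg l) (subst sg r)
| der_refl t : derivable t t
| der_sym t u : derivable t u -> derivable u t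
| der_trans t u v : derivable t u -> derivable u v -> derivable t v
| der_pre a t u : derivable t u -> derivable (Pre a t) (Pre a u)
| der_plus t t' u u' : derivable t t' -> derivable u u' ->
    derivable (Plus t u) (Plus t' u').

End FTP.

From mathcomp Require Import all_boot.
From Stdlib Require Import Setoid.

(* Soundness: closed instances of the axioms are bisimilar, and bisimilarity is
   an equivalence and a congruence.  Completeness: a closed term [t] absorbs any
   closed [s] whose transitions are matched by [t] up to provable equality and
   whose predicates hold in [t], i.e. [t = t + s] is derivable; for bisimilar
   [t] and [t'], induction on depth turns the matching of continuations into
   provable equalities, so [t = t + t' = t' + t = t']. *)

Set Implicit Arguments.

Section FTP.
Variables (A Pr : finType) (implicit : pred Pr) (AP : Pr -> pred A).

Local Notation term := (term A Pr).
Local Notation holds := (holds implicit AP).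
Local Notation bisim := (bisim implicit AP).
Local Notation derivable := (derivable implicit AP).
Local Notation der_refl := (der_refl implicit AP).

Lemma subst_closed (sg : nat -> term) t : closed_term t -> subst sg t = t.
Proof. by elim: t => //= [a u IHu /IHu -> | u IHu v IHv [/IHu -> /IHv ->]]. Qed.

Lemma closed_subst (sg : nat -> term) t :
  (forall n, closed_term (sg n)) -> closed_term (subst sg t).
Proof. by move=> sg_closed; elim: t => //= u IHu v IHv. Qed.

Lemma subst_comp (sg sg' : nat -> term) t :
  subst sg' (subst sg t) = subst (fun n => subst sg' (sg n)) t.
Proof. by elim: t => //= [a u -> | u -> v ->]. Qed.

Lemma step_closed (s : term) a s' : step s a s' -> closed_term s -> closed_term s'.
Proof. by elim=> //= [? ? ? ? _ IH [/IH] | ? ? ? ? _ IH [_ /IH]]. Qed.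

Lemma step_plus_iff (x y : term) a z : step (Plus x y) a z <-> step x a z \/ step y a z.
Proof.
split=> [H | [H | H]]; [by inversion H; [left | right] | | ];
  by [apply: step_plusl | apply: step_plusr].
Qed.

Lemma step_pre_iff (x : term) a b z : step (Pre a x) b z <-> b = a /\ z = x.
Proof. by split=> [H | [-> ->]]; [inversion H | constructor]. Qed.

Lemma step_kap P a (z : term) : ~ step (Kap A P) a z.
Proof. by move=> H; inversion H. Qed.

Lemma step_dlt a (z : term) : ~ step (Dlt A Pr) a z.
Proof. by move=> H; inversion H. Qed.

Lemma holds_plus_iff P (x y : term) : holds P (Plus x y) <-> holds P x \/ holds P y.
Proof.
split=> [H | [H | H]]; [by inversion H; [left | right] | | ];
  by [apply: holds_plusl | apply: holds_plusr].
Qed.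

Lemma holds_pre_iff P a (x : term) :
  holds P (Pre a x) <-> [/\ implicit P, a \in AP P & holds P x].
Proof. by split=> [H | [*]]; [inversion H | apply: holds_pre]. Qed.

Lemma holds_kap_iff P Q : holds P (Kap A Q) <-> P = Q.
Proof. by split=> [H | ->]; [inversion H | constructor]. Qed.

Lemma holds_dlt P : ~ holds P (Dlt A Pr).
Proof. by move=> H; inversion H. Qed.

Lemma bisim_closed s t : bisim s t -> closed_term s /\ closed_term t.
Proof. by case=> R [[R_closed _] /R_closed]. Qed.

Lemma bisim_sym s t : bisim s t -> bisim t s.
Proof. by case=> R [R_bisim /(proj1 (proj2 R_bisim))]; exists R. Qed.

Lemma bisim_step s t a s' :
  bisim s t -> step s a s' -> exists t', step t a t' /\ bisim s' t'.
Proof.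
case=> R [R_bisim Rst] /(proj1 (proj2 (proj2 R_bisim) _ _ Rst)) [t' [tt' Rs't']].
by exists t'; split=> //; exists R.
Qed.

Lemma bisim_holds s t P : bisim s t -> holds P s -> holds P t.
Proof. by case=> R [[_ [_ R_transfer]] /R_transfer [_]]; apply. Qed.

(* Bisimilarity is itself a bisimulation, so a pair whose one-step behaviour is
   matched up to bisimilarity can be added to it. *)
Lemma bisim_intro s t :
  closed_term s -> closed_term t ->
  (forall a s', step s a s' -> exists t', step t a t' /\ bisim s' t') ->
  (forall a t', step t a t' -> exists s', step s a s' /\ bisim s' t') ->
  (forall P, holds P s <-> holds P t) ->
  bisim s t.
Proof.
move=> s_closed t_closed s_sim t_sim st_holds.
exists (fun x y => [\/ bisim x y, x = s /\ y = t | x = t /\ y = s]).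
split; last by constructor 2.
split; [|split].
- by move=> x y [/bisim_closed | [-> ->] | [-> ->]].
- by move=> x y [/bisim_sym | [-> ->] | [-> ->]]; [constructor 1 | constructor 3 | constructor 2].
- move=> x y [xy | [-> ->] | [-> ->]]; split=> [a x' xx' | P].
  + by have [y' [yy' x'y']] := bisim_step xy xx'; exists y'; split; [| constructor 1].
  + exact: bisim_holds.
  + by have [y' [yy' x'y']] := s_sim _ _ xx'; exists y'; split; [| constructor 1].
  + by case: (st_holds P).
  + have [y' [yy' y'x']] := t_sim _ _ xx'.
    by exists y'; split; [| constructor 1; apply: bisim_sym].
  + by case: (st_holds P).
Qed.

Lemma bisim_refl s : closed_term s -> bisim s s.
Proof.
move=> s_closed; exists (fun x y => closed_term x /\ x = y); split=> //.
split; [|split]; move=> x y [x_closed <-] //.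
split=> // a x' xx'; exists x'; split=> //; split=> //.
exact: step_closed xx' x_closed.
Qed.

Lemma bisim_trans s u t : bisim s u -> bisim u t -> bisim s t.
Proof.
move=> su ut; exists (fun x y => exists z, bisim x z /\ bisim z y).
split; last by exists u.
split; [|split]; move=> x y [z [xz zy]].
- by split; [case: (bisim_closed xz) | case: (bisim_closed zy)].
- by exists z; split; apply: bisim_sym.
- split=> [a x' xx' | P /(bisim_holds xz) /(bisim_holds zy)] //.
  have [z' [zz' x'z']] := bisim_step xz xx'.
  have [y' [yy' z'y']] := bisim_step zy zz'.
  by exists y'; split=> //; exists z'.
Qed.

Lemma bisim_pre a s t : bisim s t -> bisim (Pre a s) (Pre a t).
Proof.
move=> st; have [s_closed t_closed] := bisim_closed st.
apply: bisim_intro => //.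
- by move=> b s' /step_pre_iff [-> ->]; exists t; split=> //; constructor.
- by move=> b t' /step_pre_iff [-> ->]; exists s; split=> //; constructor.
- move=> P; rewrite !holds_pre_iff.
  split=> -[? ? ?]; split=> //; [exact: (bisim_holds st) | exact: (bisim_holds (bisim_sym st))].
Qed.

Lemma bisim_plus s1 s2 t1 t2 :
  bisim s1 t1 -> bisim s2 t2 -> bisim (Plus s1 s2) (Plus t1 t2).
Proof.
move=> st1 st2; have [? ?] := bisim_closed st1; have [? ?] := bisim_closed st2.
apply: bisim_intro => //=.
- move=> a s' /step_plus_iff
    [/(bisim_step st1) [t' [? ?]] | /(bisim_step st2) [t' [? ?]]];
    exists t'; (split=> //); apply/step_plus_iff; [by left | by right].
- move=> a t' /step_plus_iff
    [/(bisim_step (bisim_sym st1)) [s' [? ?]] | /(bisim_step (bisim_sym st2)) [s' [? ?]]];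
    exists s'; (split; last exact: bisim_sym); apply/step_plus_iff; [by left | by right].
- move=> P; rewrite !holds_plus_iff.
  have := @bisim_holds _ _ P st1; have := @bisim_holds _ _ P (bisim_sym st1).
  have := @bisim_holds _ _ P st2; have := @bisim_holds _ _ P (bisim_sym st2).
  tauto.
Qed.

Lemma bisim_same s t :
  closed_term s -> closed_term t ->
  (forall a z, step s a z <-> step t a z) ->
  (forall P, holds P s <-> holds P t) ->
  bisim s t.
Proof.
move=> s_closed t_closed same_steps; apply: bisim_intro => // a z sz;
  exists z; split; try apply/same_steps => //; apply: bisim_refl.
- exact: step_closed sz s_closed.
- exact: step_closed sz t_closed.
Qed.

Lemma axiom_sound l r sg :
  axiom implicit AP l r -> (forall n, closed_term (sg n)) ->
  bisim (subst sg l) (subst sg r).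
Proof.
move=> lr sg_closed; apply: bisim_same; try exact: closed_subst.
- move=> b z; have := @step_dlt b z.
  case: lr => [|||| P a _ _] /=; rewrite ?step_plus_iff ?step_pre_iff;
    try have := @step_kap P b z; tauto.
- move=> Q; have := @holds_dlt Q.
  case: lr => [|||| P a impP aP] /=; rewrite ?holds_plus_iff ?holds_pre_iff ?holds_kap_iff;
    try tauto.
  (* the extra summand [Kap P] is already implied through [Pre a] since [P] is implicit *)
  move=> _; split=> [? | [// | ->]]; first by left.
  by split=> //; apply: holds_plusr; constructor.
Qed.

Lemma derivable_sound t u :
  derivable t u -> forall sg, (forall n, closed_term (sg n)) ->
  bisim (subst sg t) (subst sg u).
Proof.
elim=> {t u} [sg l r lr | t | t u _ IH | t u v _ IHtu _ IHuv | a t u _ IH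
             | t t' u u' _ IHt _ IHu] sg' sg'_closed /=.
- rewrite !subst_comp; apply: axiom_sound => // n; exact: closed_subst.
- exact/bisim_refl/closed_subst.
- exact/bisim_sym/IH.
- exact: bisim_trans (IHtu _ sg'_closed) (IHuv _ sg'_closed).
- exact/bisim_pre/IH.
- exact: bisim_plus (IHt _ sg'_closed) (IHu _ sg'_closed).
Qed.

Definition subst3 (x y z : term) (n : nat) : term :=
  if n is 0 then x else if n is 1 then y else z.

Lemma der_plusC (x y : term) : derivable (Plus x y) (Plus y x).
Proof. exact (der_ax (subst3 x y x) (ax_comm _ _)). Qed.

Lemma der_plusA (x y z : term) : derivable (Plus (Plus x y) z) (Plus x (Plus y z)).
Proof. exact (der_ax (subst3 x y z) (ax_assoc _ _)). Qed.

Lemma der_plusid (x : term) : derivable (Plus x x) x.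
Proof. exact (der_ax (subst3 x x x) (ax_idem _ _)). Qed.

Lemma der_plus_dlt (x : term) : derivable (Plus x (Dlt A Pr)) x.
Proof. exact (der_ax (subst3 x x x) (ax_delta _ _)). Qed.

Lemma der_pre_kap (x : term) P a :
  implicit P -> a \in AP P ->
  derivable (Pre a (Plus x (Kap A P))) (Plus (Pre a (Plus x (Kap A P))) (Kap A P)).
Proof. by move=> impP aP; exact (der_ax (subst3 x x x) (ax_impl impP aP)). Qed.

Lemma der_absorb_plusl (x y z : term) :
  derivable x (Plus x z) -> derivable (Plus x y) (Plus (Plus x y) z).
Proof.
move=> xz; apply: der_trans (der_plus xz (der_refl y)) _.
apply: der_trans (der_plusA _ _ _) _; apply: der_trans _ (der_sym (der_plusA _ _ _)).
exact: der_plus (der_refl x) (der_plusC _ _).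
Qed.

Lemma der_absorb_plusr (x y z : term) :
  derivable y (Plus y z) -> derivable (Plus x y) (Plus (Plus x y) z).
Proof.
move=> yz; apply: der_trans (der_plusC _ _) _.
apply: der_trans (der_absorb_plusl x yz) _.
exact: der_plus (der_plusC _ _) (der_refl z).
Qed.

Lemma holds_absorb P (t : term) : holds P t -> derivable t (Plus t (Kap A P)).
Proof.
elim=> {P t} [P | P x y _ IH | P x y _ IH | P a x impP aP _ IH].
- exact/der_sym/der_plusid.
- exact: der_absorb_plusl.
- exact: der_absorb_plusr.
- apply: der_trans (der_pre a IH) _; apply: der_trans (der_pre_kap x impP aP) _.
  exact: der_plus (der_pre a (der_sym IH)) (der_refl _).
Qed.

Lemma step_absorb (t : term) a u : step t a u -> derivable t (Plus t (Pre a u)).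
Proof.
elim=> {t a u} [a x | a x x' y _ IH | a x y y' _ IH].
- exact/der_sym/der_plusid.
- exact: der_absorb_plusl.
- exact: der_absorb_plusr.
Qed.

Lemma absorb_simulated (t s : term) :
  closed_term s ->
  (forall a u, step s a u -> exists v, step t a v /\ derivable u v) ->
  (forall P, holds P s -> holds P t) ->
  derivable t (Plus t s).
Proof.
elim: s => [n | | P | a u _ | s1 IH1 s2 IH2] //= s_closed s_sim s_holds.
- exact/der_sym/der_plus_dlt.
- by apply/holds_absorb/s_holds; constructor.
- have [v [tv uv]] := s_sim a u (step_pre a u).
  exact: der_trans (step_absorb tv) (der_plus (der_refl t) (der_pre a (der_sym uv))).
- case: s_closed => s1_closed s2_closed.
  have t_s1 : derivable t (Plus t s1).
    apply: IH1 => // [a u su | P Ps]; [apply: s_sim | apply: s_holds].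
      exact: step_plusl su.
    exact: holds_plusl Ps.
  have t_s2 : derivable t (Plus t s2).
    apply: IH2 => // [a u su | P Ps]; [apply: s_sim | apply: s_holds].
      exact: step_plusr su.
    exact: holds_plusr Ps.
  apply: der_trans t_s1 _; apply: der_trans (der_plus t_s2 (der_refl s1)) _.
  exact: der_trans (der_plusA _ _ _) (der_plus (der_refl t) (der_plusC _ _)).
Qed.

Fixpoint depth (t : term) : nat :=
  match t with
  | Pre _ u => (depth u).+1
  | Plus u v => maxn (depth u) (depth v)
  | _ => 0
  end.

Lemma step_depth (t : term) a u : step t a u -> depth u < depth t.
Proof. by elim=> //= [? ? ? ? _ IH | ? ? ? ? _ IH]; rewrite leq_max IH ?orbT. Qed.

Lemma bisim_derivable_depth n (t t' : term) :
  depth t + depth t' < n -> bisim t t' -> derivable t t'.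
Proof.
elim: n t t' => // n IH.
have absorb s s' : depth s + depth s' < n.+1 -> bisim s s' -> derivable s' (Plus s' s).
  move=> depth_ss' ss'; apply: absorb_simulated (proj1 (bisim_closed ss')) _ _.
    move=> a u su; have [v [s'v uv]] := bisim_step ss' su.
    exists v; split=> //; apply: IH uv.
    have := leq_add (step_depth su) (step_depth s'v); rewrite addSn addnS => /ltnW.
    by move/leq_trans; apply.
  by move=> P; apply: bisim_holds.
move=> t t' depth_tt' tt'.
apply: der_trans (absorb t' t _ (bisim_sym tt')) _; first by rewrite addnC.
exact: der_trans (der_plusC _ _) (der_sym (absorb t t' depth_tt' tt')).
Qed.

Lemma bisim_derivable (t t' : term) : bisim t t' -> derivable t t'.
Proof. exact: bisim_derivable_depth. Qed.

Lemma derivable_bisim (t t' : term) :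
  closed_term t -> closed_term t' -> derivable t t' -> bisim t t'.
Proof.
move=> t_closed t'_closed /derivable_sound/(_ (fun _ => Dlt A Pr) (fun _ => I)).
by rewrite !subst_closed.
Qed.

End FTP.

Theorem theorem1 (A Pr : finType) (implicit : pred Pr) (AP : Pr -> pred A)
  (A_nonempty : 0 < #|A|) (t t' : term A Pr) :
  closed_term t -> closed_term t' ->
  (derivable implicit AP t t' <-> bisim implicit AP t t').
Proof.
move=> t_closed t'_closed.
by split; [exact: derivable_bisim | exact: bisim_derivable].
Qed.
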